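(* Let $F\subset\mathbb G^d$ be a nonempty closed set and $\tau=\tau_F$ the associated quasimeasure, with generating series $\sum_{\mathbf n}\widehat\tau_{\mathbf n}W_{\mathbf n}$ and partial sums $S_{\mathbf N}$. Then for every $\mathbf g\notin F$ there is $w=w(\mathbf g)\in\mathbb N_0$ such that $S_{2^w\mathbf M}(\mathbf g)=0$ for all $\mathbf M\in\mathbb N^d$.
   Context: Fix $d\ge2$. $\mathbb G$ is the dyadic group: sequences $g=(g_k)_{k\ge0}$, $g_k\in\{0,1\}$, coordinatewise addition mod 2, product topology; $\mathbb G^d$ its $d$-th power. For $n\in\mathbb N_0$, $n=\sum_kn_k2^k$, $n_k\in\{0,1\}$. Dyadic interval of rank $k$: $\Delta^{(k)}_m=\{g: g_t=m_{k-1-t},\ 0\le t<k\}$; dyadic cube $\Delta^{(k)}_{\mathbf m}=\prod_l\Delta^{(k)}_{m^l}$. Vector order coordinatewise, $\mathbf 1=(1,\dots,1)$. Walsh functions $W_n(g)=\prod_k(-1)^{g_kn_k}$, $W_{\mathbf n}(\mathbf g)=\prod_lW_{n^l}(g^l)$; $W^{(k)}_{\mathbf n\mathbf m}$ is the constant value of $W_{\mathbf n}$ on $\Delta^{(k)}_{\mathbf m}$ ($\mathbf n,\mathbf m<2^k\mathbf 1$). Partial sums $S_{\mathbf N}=\sum_{\mathbf n<\mathbf N}a_{\mathbf n}W_{\mathbf n}$. Quasimeasure: $\tau$ on dyadic cubes with $\tau(\Delta^{(k)}_{\mathbf m})=\sum_{\boldsymbol\sigma\in\{0,1\}^d}\tau(\Delta^{(k+1)}_{2\mathbf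 m+\boldsymbol\sigma})$; Fourier–Walsh coefficients $\widehat\tau_{\mathbf n}=\sum_{\mathbf m<2^k\mathbf 1}W^{(k)}_{\mathbf n\mathbf m}\tau(\Delta^{(k)}_{\mathbf m})$ ($\mathbf n<2^k\mathbf 1$); the series generating $\tau$ is $\sum\widehat\tau_{\mathbf n}W_{\mathbf n}$. $\tau_F$ is the unique nonnegative quasimeasure with $\tau_F(\mathbb G^d)=1$, $\tau_F(\Delta)=0$ iff $\Delta\cap F=\emptyset$, and such that if $\Delta^{(k)}_{\mathbf m}$ meets $F$ and exactly $M$ of its $2^d$ children $\Delta^{(k+1)}_{2\mathbf m+\boldsymbol\sigma}$ meet $F$, each of those has value $\tau_F(\Delta^{(k)}_{\mathbf m})/M$ and the others $0$. *)

From HB Require Import structures.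
From mathcomp Require Import all_boot all_order all_algebra.
From mathcomp Require Import all_classical all_reals topology cantor.
Set Implicit Arguments. Unset Strict Implicit. Unset Printing Implicit Defensive.
Import Order.TTheory GRing.Theory Num.Theory.
Local Open Scope ring_scope.

(* The dyadic group G = {0,1}^N with the product topology (cantor_space), and
   its d-th power G^d with the product topology. *)
Definition Gd (d : nat) : Type := prod_topology (fun _ : 'I_d => cantor_space).
HB.instance Definition _ d := Topological.on (Gd d).

Definition digit (n k : nat) : bool := odd (n %/ 2 ^ k).

Definition in_dyint (k m : nat) (g : cantor_space) : Prop :=
  forall t, (t < k)%N -> g t = digit m (k.-1 - t).

Definition in_dycube d (k : nat) (m : 'I_d -> nat) (g : Gd d) : Prop :=
  forall l, in_dyint k (m l) (g l).

Definition idx_ok d (k : nat) (m : 'I_d -> nat) : Prop :=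
  forall l, (m l < 2 ^ k)%N.

(* Walsh function W_n(g) = prod_k (-1)^{g_k n_k}; digits of n vanish for k >= n *)
Definition walsh {R : realType} (n : nat) (g : cantor_space) : R :=
  \prod_(k < n) (if g k && digit n k then -1 else 1).

Definition walshd {R : realType} d (n : 'I_d -> nat) (g : Gd d) : R :=
  \prod_(l < d) walsh (n l) (g l).

Definition dyrep (k m : nat) : cantor_space :=
  fun t => if (t < k)%N then digit m (k.-1 - t) else false.

(* W^{(k)}_{n m}: the (constant) value of W_n on Delta^(k)_m, for n,m < 2^k 1 *)
Definition walsh_cube {R : realType} d (k : nat) (n m : 'I_d -> nat) : R :=
  walshd n (fun l => dyrep k (m l)).

(* A function on dyadic cubes: tau k m = tau(Delta^(k)_m). *)
Definition cubefun (R : realType) (d : nat) := nat -> ('I_d -> nat) -> R.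

Definition child d (m : 'I_d -> nat) (s : {ffun 'I_d -> bool}) : 'I_d -> nat :=
  fun l => (2 * m l + s l)%N.

Definition quasimeasure {R : realType} d (tau : cubefun R d) : Prop :=
  forall k m, idx_ok k m ->
    tau k m = \sum_(s : {ffun 'I_d -> bool}) tau k.+1 (child m s).

Definition meets d (F : set (Gd d)) (k : nat) (m : 'I_d -> nat) : Prop :=
  exists g, F g /\ in_dycube k m g.

Definition nmeet d (F : set (Gd d)) (k : nat) (m : 'I_d -> nat) : nat :=
  #|[set s : {ffun 'I_d -> bool} | `[< meets F k.+1 (child m s) >] ]|.

Definition is_tauF {R : realType} d (F : set (Gd d)) (tau : cubefun R d) : Prop :=
  [/\ quasimeasure tau,
      (forall k m, idx_ok k m -> 0 <= tau k m),
      tau 0%N (fun _ => 0%N) = 1,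
      (forall k m, idx_ok k m -> (tau k m = 0 <-> ~ meets F k m)) &
      (forall k m, idx_ok k m -> meets F k m ->
        forall s : {ffun 'I_d -> bool},
          tau k.+1 (child m s) =
            if `[< meets F k.+1 (child m s) >]
            then tau k m / (nmeet F k m)%:R else 0)].

(* Fourier–Walsh coefficient, computed at rank k = max_l n_l (so n < 2^k 1);
   for a quasimeasure this does not depend on the admissible rank chosen. *)
Definition fw_coef {R : realType} d (tau : cubefun R d) (n : 'I_d -> nat) : R :=
  let k := (\max_(l < d) n l)%N in
  \sum_(m : {ffun 'I_d -> 'I_(2 ^ k)})
     walsh_cube k n (fun l => val (m l)) * tau k (fun l => val (m l)).

Definition psum {R : realType} d (a : ('I_d -> nat) -> R) (N : 'I_d -> nat)
    (g : Gd d) : R :=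
  \sum_(n : {ffun 'I_d -> 'I_(\max_(l < d) N l)} | [forall l, (n l < N l)%N])
     a (fun l => val (n l)) * walshd (fun l => val (n l)) g.

(* Computing all Fourier-Walsh coefficients of tau at one common rank K gives
   S_N(g) = sum over the rank-K cubes D of tau(D) * D_N(x_D + g), where x_D is a
   point of D and D_N = sum_(n < N) W_n is the dyadic Dirichlet kernel.  As F is
   closed, the rank-w cylinder around g misses F, so tau vanishes on every cube
   (K >= w) whose first w digits agree with those of g.  For any other cube,
   x_D + g has a digit 1 at some place t < w of some coordinate l0, and when
   2^(t+1) divides N_l0, toggling digit t of the l0-th index is a sign-reversing
   involution of the terms of D_N(x_D + g), which therefore vanishes. *)

From HB Require Import structures.
From mathcomp Require Import all_boot all_order all_algebra.
From mathcomp Require Import all_classical all_reals topology cantor.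
From mathcomp Require Import zify.
Import Order.TTheory GRing.Theory Num.Theory.

Lemma digit_small n k : n < 2 ^ k -> digit n k = false.
Proof. by move=> lt_n; rewrite /digit divn_small. Qed.

Lemma digit_bool (b : bool) : digit b 0 = b.
Proof. by rewrite /digit divn1 oddb. Qed.

Lemma digitMD q r s k : r < 2 ^ s ->
  digit (q * 2 ^ s + r) k = if k < s then digit r k else digit q (k - s).
Proof.
move=> lt_r; rewrite /digit; case: (ltnP k s) => [lt_ks|le_sk].
  rewrite -(subnK (ltnW lt_ks)) expnD mulnA divnMDl ?expn_gt0 // oddD oddM.
  by rewrite oddX subn_eq0 leqNgt lt_ks andbF.
by rewrite -{1}(subnKC le_sk) expnD divnMA divnMDl ?expn_gt0 // (divn_small lt_r) addn0.
Qed.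

Lemma digit_double_addS m (b : bool) k : digit (2 * m + b) k.+1 = digit m k.
Proof. by rewrite mulnC -(expn1 2) digitMD ?subSS ?subn0 //; case: b. Qed.

Lemma divn_eq_digit n t : n = n %/ 2 ^ t.+1 * 2 ^ t.+1 + digit n t * 2 ^ t + n %% 2 ^ t.
Proof.
rewrite {1}(divn_eq n (2 ^ t)) {1}(divn_eq (n %/ 2 ^ t) 2) modn2 expnSr divnMA.
by rewrite mulnDl -mulnA (mulnC 2).
Qed.

Definition flipn (t n : nat) : nat :=
  n %/ 2 ^ t.+1 * 2 ^ t.+1 + ~~ digit n t * 2 ^ t + n %% 2 ^ t.

Lemma ltn_bitD (b : bool) r t : r < 2 ^ t -> b * 2 ^ t + r < 2 ^ t.+1.
Proof. by rewrite expnS; case: b => /=; lia. Qed.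

Lemma digit_bitD q (b : bool) r t k : r < 2 ^ t ->
  digit (q * 2 ^ t.+1 + b * 2 ^ t + r) k =
  if k == t then b else digit (q * 2 ^ t.+1 + r) k.
Proof.
move=> lt_r; have lt_r1 : r < 2 ^ t.+1 by rewrite (ltn_trans lt_r) // ltn_exp2l.
rewrite -addnA !digitMD ?ltn_bitD //.
have [->|ne_kt] := eqVneq k t; first by rewrite ltnSn ltnn subnn digit_bool.
by rewrite ltnS leq_eqVlt (negbTE ne_kt); case: (k < t).
Qed.

Lemma digit_flipn t n k : digit (flipn t n) k = (k == t) (+) digit n k.
Proof.
have lt_r : n %% 2 ^ t < 2 ^ t by rewrite ltn_pmod ?expn_gt0.
have := digit_bitD (n %/ 2 ^ t.+1) (digit n t) (n %% 2 ^ t) t k lt_r.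
rewrite -divn_eq_digit => ->.
by rewrite /flipn digit_bitD //; case: eqP.
Qed.

Lemma flipn_bitD q (b : bool) r t : r < 2 ^ t ->
  flipn t (q * 2 ^ t.+1 + b * 2 ^ t + r) = q * 2 ^ t.+1 + ~~ b * 2 ^ t + r.
Proof.
move=> lt_r; rewrite /flipn; set n := q * _ + _ + r.
have -> : n %/ 2 ^ t.+1 = q.
  by rewrite /n -addnA divnMDl ?expn_gt0 // divn_small ?ltn_bitD ?addn0.
have -> : n %% 2 ^ t = r.
  by rewrite /n expnS mulnA -mulnDl modnMDl modn_small.
by rewrite /n digit_bitD // eqxx.
Qed.

Lemma flipnK t : involutive (flipn t).
Proof.
move=> n; rewrite [flipn t n]/flipn flipn_bitD ?ltn_pmod ?expn_gt0 // negbK.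
exact/esym/divn_eq_digit.
Qed.

Lemma flipn_lt {t n N} : 2 ^ t.+1 %| N -> n < N -> flipn t n < N.
Proof.
move=> /dvdnP [P ->] lt_nN.
have lt_qP : n %/ 2 ^ t.+1 < P by rewrite ltn_divLR ?expn_gt0.
apply: (@leq_trans ((n %/ 2 ^ t.+1).+1 * 2 ^ t.+1)); last by rewrite leq_mul2r lt_qP orbT.
by rewrite /flipn -addnA mulSn addnC ltn_add2r ltn_bitD ?ltn_pmod ?expn_gt0.
Qed.

Local Open Scope ring_scope.

Definition addG (x y : cantor_space) : cantor_space := fun k => x k (+) y k.

Definition addGd {d} (x y : Gd d) : Gd d := fun l => addG (x l) (y l).

Lemma sumr_eq0_involutionN (R : numDomainType) (I : finType) (P : pred I)
    (F : I -> R) (phi : I -> I) :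
  involutive phi -> (forall i, P (phi i) = P i) ->
  (forall i, P i -> F (phi i) = - F i) -> \sum_(i | P i) F i = 0.
Proof.
move=> phiK Pphi Fphi; set S := (X in X = 0).
have : S = - S.
  rewrite {1}/S (reindex_inj (can_inj phiK)) /= (eq_bigl _ _ Pphi) -sumrN.
  exact: eq_bigr.
by move/eqP; rewrite -addr_eq0 -mulr2n mulrn_eq0 => /eqP.
Qed.

Section Walsh.
Context {R : realType}.

Lemma walsh_widen n C (x : cantor_space) : (n <= C)%N ->
  walsh n x = \prod_(k < C) (if x k && digit n k then -1 else 1) :> R.
Proof.
move=> le_nC; rewrite /walsh.
rewrite (big_ord_widen C (fun k => if x k && digit n k then -1 else 1 : R) le_nC) big_mkcond.
apply: eq_bigr => k _; case: ifP => // /negbT; rewrite -leqNgt => le_nk.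
by rewrite digit_small ?andbF // (leq_ltn_trans le_nk) // ltn_expl.
Qed.

Lemma walsh_ext n (x y : cantor_space) :
  (forall k, digit n k -> x k = y k) -> walsh n x = walsh n y :> R.
Proof.
by move=> xy; apply: eq_bigr => k _; case dnk: (digit n k); rewrite ?andbF ?xy.
Qed.

Lemma walshM n x y : walsh n x * walsh n y = walsh n (addG x y) :> R.
Proof.
rewrite /walsh -big_split; apply: eq_bigr => k _ /=; rewrite /addG.
by case: (x k); case: (y k); case: (digit n k); rewrite /= ?mulrNN ?mulr1 ?mul1r.
Qed.

Lemma walsh_flipn t n (z : cantor_space) : z t ->
  walsh (flipn t n) z = - walsh n z :> R.
Proof.
move=> zt; set C := maxn (maxn n (flipn t n)) t.+1.
have lt_tC : (t < C)%N by rewrite leq_maxr.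
rewrite !(walsh_widen _ C) ?leq_max ?leqnn ?orbT //.
rewrite (bigD1 (Ordinal lt_tC)) // [in RHS](bigD1 (Ordinal lt_tC)) //=.
rewrite digit_flipn eqxx zt -mulNr; congr (_ * _); last first.
  apply: eq_bigr => k ne_kt; rewrite digit_flipn.
  by have /negbTE -> : (k != t :> nat) by [].
by case: (digit n t); rewrite /= ?opprK.
Qed.

Lemma walshdM {d} n (x y : Gd d) : walshd n x * walshd n y = walshd n (addGd x y) :> R.
Proof. by rewrite /walshd -big_split; apply: eq_bigr => l _; exact: walshM. Qed.

Lemma walshd_flipn {d} n l0 t (z : Gd d) : z l0 t ->
  walshd (fun l => if l == l0 then flipn t (n l) else n l) z = - walshd n z :> R.
Proof.
move=> zt; rewrite /walshd (bigD1 l0) // [in RHS](bigD1 l0) //= eqxx.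
rewrite walsh_flipn // mulNr; congr (- (_ * _)).
by apply: eq_bigr => l /negbTE ->.
Qed.

Lemma psum1_eq0 {d} (N : 'I_d -> nat) (z : Gd d) l0 t :
  z l0 t -> (2 ^ t.+1 %| N l0)%N -> psum (fun _ => 1) N z = 0 :> R.
Proof.
move=> zt dvd_N; rewrite /psum; set B := (\max_(l < d) N l)%N.
pose flip (i : 'I_B) : 'I_B := insubd i (flipn t i).
have flipv i : val (flip i) = if (flipn t i < B)%N then flipn t i else val i.
  exact: val_insubd.
have flipK : involutive flip.
  move=> i; apply: val_inj; rewrite !flipv.
  by case: (ltnP (flipn t i) B) => [lt_fB|le_Bf]; rewrite ?flipnK ?ltn_ord // ltnNge le_Bf.
have flipE (i : 'I_B) : (i < N l0)%N -> val (flip i) = flipn t i.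
  by move=> lt_i; rewrite flipv (leq_trans (flipn_lt dvd_N lt_i)) ?leq_bigmax.
pose phi (n : {ffun 'I_d -> 'I_B}) := [ffun l => if l == l0 then flip (n l) else n l].
apply: (@sumr_eq0_involutionN _ _ _ _ phi).
- move=> n; apply/ffunP => l; rewrite !ffunE.
  by case: eqP => [->|]; rewrite ?eqxx ?flipK // => /eqP /negbTE ->.
- move=> n; apply/forallP/forallP => lt_n l; have := lt_n l; rewrite ffunE;
    case: eqP => // ->.
    by rewrite flipv; case: ifP => // _ lt_f; rewrite -(flipnK t (n l0)) flipn_lt.
  by move=> lt_nl0; rewrite flipE // flipn_lt.
- move=> n /forallP lt_n; rewrite !mul1r -(walshd_flipn _ l0 t z zt); congr walshd.
  by apply: funext => l; rewrite ffunE; case: eqP => // ->; rewrite flipE.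
Qed.

End Walsh.

Section FourierWalshCoefficients.
Context {R : realType} {d : nat} {tau : cubefun R d}.
Hypothesis qm_tau : quasimeasure tau.

Definition fw_coef_at (K : nat) (n : 'I_d -> nat) : R :=
  \sum_(m : {ffun 'I_d -> 'I_(2 ^ K)})
     walsh_cube K n (fun l => val (m l)) * tau K (fun l => val (m l)).

Lemma walsh_cube_child K (n m : 'I_d -> nat) s : (forall l, n l < 2 ^ K)%N ->
  walsh_cube K.+1 n (child m s) = walsh_cube K n m :> R.
Proof.
move=> lt_n; apply: eq_bigr => l _; apply: walsh_ext => k dnk.
have lt_kK : (k < K)%N.
  rewrite ltnNge; apply: contraTN dnk => le_Kk.
  by rewrite digit_small // (leq_trans (lt_n l)) ?leq_pexp2l.
rewrite /dyrep /child lt_kK ltnW //=.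
have -> : (K - k = (K.-1 - k).+1)%N by lia.
exact: digit_double_addS.
Qed.

Lemma sum_child K (G : ('I_d -> nat) -> R) :
  \sum_(m : {ffun 'I_d -> 'I_(2 ^ K.+1)}) G (fun l => val (m l)) =
  \sum_(m : {ffun 'I_d -> 'I_(2 ^ K)}) \sum_(s : {ffun 'I_d -> bool})
     G (child (fun l => val (m l)) s).
Proof.
have lt_child (a : 'I_(2 ^ K)) (b : bool) : (2 * a + b < 2 ^ K.+1)%N.
  by have := ltn_ord a; rewrite expnS; case: b => /=; lia.
have lt_half (a : 'I_(2 ^ K.+1)) : (a %/ 2 < 2 ^ K)%N.
  by rewrite ltn_divLR // mulnC -expnS.
pose h (p : {ffun 'I_d -> 'I_(2 ^ K)} * {ffun 'I_d -> bool}) : {ffun 'I_d -> 'I_(2 ^ K.+1)} :=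
  [ffun l => Ordinal (lt_child (p.1 l) (p.2 l))].
pose h' (m : {ffun 'I_d -> 'I_(2 ^ K.+1)}) :=
  ([ffun l => Ordinal (lt_half (m l))], [ffun l => odd (m l)]).
have h_bij : bijective h.
  exists h' => [[m s]|m]; last first.
    apply/ffunP => l; apply: val_inj; rewrite !ffunE /=.
    by rewrite [RHS](divn_eq _ 2) modn2 mulnC.
  congr (_, _); apply/ffunP => l; rewrite !ffunE; last by rewrite /= oddD oddM /= oddb.
  by apply: val_inj; rewrite /= mulnC divnMDl // divn_small ?addn0 //; case: (s l).
rewrite pair_big (reindex h) /=; last exact: onW_bij.
by apply: eq_bigr => p _; congr G; apply: funext => l; rewrite ffunE.
Qed.

Lemma fw_coef_atS K n : (forall l, n l < 2 ^ K)%N -> fw_coef_at K n = fw_coef_at K.+1 n.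
Proof.
move=> lt_n; rewrite /fw_coef_at (sum_child _ (fun m => walsh_cube K.+1 n m * tau K.+1 m)).
apply: eq_bigr => m _.
rewrite qm_tau => [|l]; last exact: ltn_ord.
by rewrite mulr_sumr; apply: eq_bigr => s _; rewrite walsh_cube_child.
Qed.

Lemma fw_coefE K n : (\max_(l < d) n l <= K)%N -> fw_coef tau n = fw_coef_at K n.
Proof.
set k0 := (\max_(l < d) n l)%N; have le_nk0 l : (n l <= k0)%N by exact: leq_bigmax.
elim: K => [|K IHK]; first by rewrite leqn0 => /eqP k0_0; rewrite /fw_coef -/k0 k0_0.
rewrite leq_eqVlt => /predU1P [<-|lt_k0K]; first by [].
rewrite IHK // fw_coef_atS // => l.
exact: leq_ltn_trans (leq_trans (le_nk0 l) lt_k0K) (ltn_expl _ _).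
Qed.

Lemma psum_fw_coef K N (g : Gd d) : (\max_(l < d) N l <= K)%N ->
  psum (fw_coef tau) N g =
  \sum_(m : {ffun 'I_d -> 'I_(2 ^ K)})
     tau K (fun l => val (m l)) * psum (fun _ => 1) N (addGd (fun l => dyrep K (m l)) g).
Proof.
move=> le_NK; rewrite /psum; set B := (\max_(l < d) N l)%N.
transitivity (\sum_(n : {ffun 'I_d -> 'I_B} | [forall l, n l < N l]%N)
  \sum_(m : {ffun 'I_d -> 'I_(2 ^ K)}) tau K (fun l => val (m l)) *
     (1 * walshd (fun l => val (n l)) (addGd (fun l => dyrep K (m l)) g))).
  apply: eq_bigr => n _; rewrite (fw_coefE K); last first.
    by apply/bigmax_leqP => l _; exact: leq_trans (ltnW (ltn_ord (n l))) le_NK.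
  rewrite /fw_coef_at mulr_suml; apply: eq_bigr => m _.
  by rewrite mul1r -walshdM /walsh_cube mulrAC mulrC.
by rewrite exchange_big; apply: eq_bigr => m _; rewrite mulr_sumr.
Qed.

End FourierWalshCoefficients.

Local Open Scope classical_set_scope.

Lemma cvg_prod_topology (I : eqType) (T : I -> topologicalType)
    (U : Type) (F : set_system U) {FF : Filter F} (u : U -> prod_topology T)
    (x : prod_topology T) :
  (forall i, (fun n => u n i) @ F --> x i) -> u @ F --> x.
Proof.
move=> cvg_u; apply/cvg_sup => i; apply/cvg_image.
  by rewrite eqEsubset; split=> // y _; exists (dfwith x i y); rewrite ?dfwithin.
move=> W /cvg_u Wi; exists ((fun f : prod_topology T => f i) @^-1` W) => //.
rewrite eqEsubset; split => [y [f Wf <-] //|y Wy].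
by exists (dfwith x i y); rewrite /= dfwithin.
Qed.

Lemma cube_nbhs_closedC {d} {F : set (Gd d)} {g : Gd d} : closed F -> ~ F g ->
  exists w, forall h : Gd d, (forall l t, (t < w)%N -> h l t = g l t) -> ~ F h.
Proof.
move=> closedF nFg; apply: contrapT => /forallNP no_w; apply: nFg.
have /choice [h h_prop] : forall w, exists h : Gd d,
    (forall l t, (t < w)%N -> h l t = g l t) /\ F h.
  move=> w; have /existsNP [h /existsNP [agree /contrapT Fh]] := no_w w.
  by exists h.
apply: (@closed_cvg _ _ \oo _ h _ closedF); first by apply: nearW => w; case: (h_prop w).
apply: cvg_prod_topology => l; apply: cvg_prod_topology => t.
apply: cvg_near_cst; exists t.+1 => // w /= lt_tw.
by case: (h_prop w) => + _; apply.
Qed.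

Theorem corollary1 (R : realType) (d : nat) (hd : (2 <= d)%N)
  (F : set (Gd d)) (hF0 : F !=set0) (hFc : closed F)
  (tau : cubefun R d) (htau : is_tauF F tau) :
  forall g : Gd d, ~ F g ->
    exists w : nat, forall M : 'I_d -> nat, (forall l, (0 < M l)%N) ->
      psum (fw_coef tau) (fun l => (2 ^ w * M l)%N) g = 0.
Proof.
move=> g nFg; case: htau => qm_tau _ _ tau_eq0 _.
have [w cube_notF] := cube_nbhs_closedC hFc nFg.
exists w => M _; set N := fun l => (2 ^ w * M l)%N.
set K := maxn (\max_(l < d) N l) w.
rewrite (psum_fw_coef qm_tau K N g (leq_maxl _ _)); apply: big1 => m _.
set x := fun l => dyrep K (m l).
have [/forallP x_eq_g|] := boolP [forall l, [forall t : 'I_w, x l t == g l t]].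
  rewrite (_ : tau K _ = 0) ?mul0r //; apply/tau_eq0 => [l|]; first exact: ltn_ord.
  case=> h [Fh h_in]; apply: cube_notF Fh => l t lt_tw.
  have lt_tK : (t < K)%N by rewrite (leq_trans lt_tw) ?leq_maxr.
  rewrite -(eqP (forallP (x_eq_g l) (Ordinal lt_tw))) /= /x /dyrep lt_tK.
  exact: h_in.
rewrite negb_forall => /existsP [l0]; rewrite negb_forall => /existsP [t x_ne_g].
rewrite (psum1_eq0 N (addGd x g) l0 t) ?mulr0 //.
  by move: x_ne_g; rewrite /addGd /addG; case: (x l0 t); case: (g l0 t).
by rewrite dvdn_mulr // dvdn_exp2l.
Qed.
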